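(* Let $u^1:S\times B\to\mathbb{R}$ and let $y:S\to\Delta(B)$ be a one-to-one map such that $U^1(\mu_0,y)\ge U^1(\mu,y)$ for every $\mu\in\mathcal{M}$. Then every neighborhood of $u^1$ in $\mathbb{R}^{S\times B}$ contains a function $\tilde u^1:S\times B\to\mathbb{R}$ such that $\tilde U^1(\mu_0,y)>\tilde U^1(\mu,y)$ for every $\mu\in\mathcal{M}$ with $\mu\neq\mu_0$, where $\tilde U^1$ is computed with $\tilde u^1$ in place of $u^1$.
   Context: $S$ and $B$ are finite sets; messages are identified with states. $m\in\Delta(S)$ has full support. $\mathcal{M}$ is the set of probability distributions on $S\times S$ both of whose marginals equal $m$; $\mu_0(s,s)=m(s)$, $\mu_0(s,t)=0$ for $s\ne t$. With $u^1$ extended linearly to mixed actions, $U^1(\mu,y)=\sum_{s,a\in S}\mu(s,a)u^1(s,y(\cdot\mid a))$. *)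

From mathcomp Require Import all_boot all_order all_algebra.
From mathcomp Require Import reals.
Set Implicit Arguments. Unset Strict Implicit. Unset Printing Implicit Defensive.
Import Order.TTheory GRing.Theory Num.Theory.
Local Open Scope ring_scope.

Section Defs.
Variable R : realType.

Definition is_dist (T : finType) (p : {ffun T -> R}) : Prop :=
  (forall t, 0 <= p t) /\ \sum_t p t = 1.

Definition in_M (S : finType) (m : {ffun S -> R}) (mu : {ffun S * S -> R}) : Prop :=
  is_dist mu /\
  (forall s, \sum_(a : S) mu (s, a) = m s) /\
  (forall a, \sum_(s : S) mu (s, a) = m a).

Definition mu0 (S : finType) (m : {ffun S -> R}) : {ffun S * S -> R} :=
  [ffun p => if p.1 == p.2 then m p.1 else 0].

Definition u_mixed (S B : finType) (u : {ffun S * B -> R}) (s : S)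
    (q : {ffun B -> R}) : R :=
  \sum_(b : B) q b * u (s, b).

Definition U1 (S B : finType) (u : {ffun S * B -> R}) (mu : {ffun S * S -> R})
    (y : S -> {ffun B -> R}) : R :=
  \sum_(s : S) \sum_(a : S) mu (s, a) * u_mixed u s (y a).

End Defs.

(** Perturb [u] in the direction [v (s, b) := y s b]: in state [s] the sender
    is rewarded by the weight that the reply to the truthful message [s] gives
    to the action played.  Expanding squares with both marginals equal to [m],
    the gain of [mu0] over [mu] in this direction is half of
    [sum_(s,a) mu (s, a) * |y s - y a|^2], which is positive as soon as [mu]
    puts mass off the diagonal, because [y] is one-to-one.  Adding a small
    multiple of [v] to [u] therefore turns the weak optimality of [mu0] into a
    strict one. *)
From mathcomp Require Import all_boot all_order all_algebra.
From mathcomp Require Import reals.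
From mathcomp Require Import ring.
Set Implicit Arguments. Unset Strict Implicit. Unset Printing Implicit Defensive.
Import Order.TTheory GRing.Theory Num.Theory.
Local Open Scope ring_scope.

Section Perturbation.
Variables (R : realType) (S B : finType).
Implicit Types (u v : {ffun S * B -> R}) (mu : {ffun S * S -> R})
  (m : {ffun S -> R}) (y : S -> {ffun B -> R}).

Lemma dist_le1 (T : finType) (p : {ffun T -> R}) t : is_dist p -> p t <= 1.
Proof. by case=> p_ge0 <-; rewrite (bigD1 t) //= lerDl sumr_ge0. Qed.

Lemma U1_addZ u v d mu y :
  U1 [ffun p => u p + d * v p] mu y = U1 u mu y + d * U1 v mu y.
Proof.
rewrite /U1 mulr_sumr -big_split; apply: eq_bigr => s _.
rewrite mulr_sumr -big_split /=; apply: eq_bigr => a _.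
rewrite (mulrCA d) -mulrDr; congr (_ * _).
rewrite /u_mixed mulr_sumr -big_split; apply: eq_bigr => b _.
by rewrite ffunE mulrDr mulrCA.
Qed.

Definition reply_sqdist y (s a : S) : R := \sum_b (y s b - y a b) ^+ 2.

Definition reply_match y : {ffun S * B -> R} := [ffun p => y p.1 p.2].

Lemma reply_sqdist_ge0 y s a : 0 <= reply_sqdist y s a.
Proof. by apply: sumr_ge0 => b _; apply: sqr_ge0. Qed.

Lemma reply_sqdist_gt0 y s a : y s != y a -> 0 < reply_sqdist y s a.
Proof.
move=> ys_neq; have [b yb_neq] : exists b, y s b != y a b.
  apply/existsP; apply: contraR ys_neq => /existsPn yb_eq.
  by apply/eqP/ffunP => b; apply/eqP; move: (yb_eq b); rewrite negbK.
rewrite /reply_sqdist (bigD1 b) //=; apply: ltr_pwDl.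
  by rewrite exprn_even_gt0 //= subr_eq0.
by apply: sumr_ge0 => i _; apply: sqr_ge0.
Qed.

(* Both square terms contribute [sum_s m s * |y s|^2], which is also the
   value of [mu0 m]. *)
Lemma U1_reply_match_gap m mu y :
  (forall s, \sum_a mu (s, a) = m s) -> (forall a, \sum_s mu (s, a) = m a) ->
  2 * (U1 (reply_match y) (mu0 m) y - U1 (reply_match y) mu y) =
  \sum_s \sum_a mu (s, a) * reply_sqdist y s a.
Proof.
move=> row_m col_m; set v := reply_match y.
set Q := fun s => \sum_b y s b ^+ 2.
have U1_mu0 : U1 v (mu0 m) y = \sum_s m s * Q s.
  apply: eq_bigr => s _; rewrite (bigD1 s) //= big1 ?addr0; last first.
    by move=> a /negPf ha; rewrite ffunE /= eq_sym ha mul0r.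
  rewrite ffunE /= eqxx; congr (_ * _); apply: eq_bigr => b _.
  by rewrite ffunE /= expr2.
have expand : \sum_s \sum_a mu (s, a) * reply_sqdist y s a =
    \sum_s \sum_a mu (s, a) * Q s + \sum_s \sum_a mu (s, a) * Q a
    - 2 * U1 v mu y.
  rewrite /U1 mulr_sumr -big_split -sumrB; apply: eq_bigr => s _.
  rewrite mulr_sumr -big_split -sumrB; apply: eq_bigr => a _.
  have -> : reply_sqdist y s a = Q s + Q a - 2 * u_mixed v s (y a).
    rewrite /Q /u_mixed mulr_sumr -big_split -sumrB; apply: eq_bigr => b _.
    rewrite ffunE /=; ring.
  rewrite /=; ring.
have row_sum : \sum_s \sum_a mu (s, a) * Q s = \sum_s m s * Q s.
  by apply: eq_bigr => s _; rewrite -mulr_suml row_m.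
have col_sum : \sum_s \sum_a mu (s, a) * Q a = \sum_s m s * Q s.
  by rewrite exchange_big; apply: eq_bigr => a _; rewrite -mulr_suml col_m.
rewrite expand row_sum col_sum U1_mu0; ring.
Qed.

Lemma in_M_offdiag m mu :
  in_M m mu -> mu <> mu0 m -> exists s a, s != a /\ 0 < mu (s, a).
Proof.
case=> -[mu_ge0 _] [row_m _] mu_neq.
have [/existsP [[s a] /andP [sa_neq mu_gt0]] | /existsPn off0] :=
  boolP [exists p : S * S, (p.1 != p.2) && (0 < mu p)].
  by exists s, a.
have mu_off0 s a : s != a -> mu (s, a) = 0.
  move=> sa_neq; apply/eqP; rewrite eq_le mu_ge0 andbT leNgt.
  by move: (off0 (s, a)); rewrite /= sa_neq.
exfalso; apply: mu_neq; apply/ffunP => -[s a]; rewrite ffunE /=.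
have [<-|sa_neq] := eqVneq s a; last by rewrite mu_off0.
rewrite -row_m (bigD1 s) //= big1 ?addr0 // => b bs_neq.
by rewrite mu_off0 // eq_sym.
Qed.

Lemma U1_reply_match_lt m mu y :
  injective y -> in_M m mu -> mu <> mu0 m ->
  U1 (reply_match y) mu y < U1 (reply_match y) (mu0 m) y.
Proof.
move=> y_inj M_mu mu_neq; have [[mu_ge0 _] [row_m col_m]] := M_mu.
rewrite -subr_gt0 -(pmulr_rgt0 _ (ltr0n R 2)) U1_reply_match_gap //.
have [s [a [sa_neq mu_gt0]]] := in_M_offdiag M_mu mu_neq.
have term_ge0 p : 0 <= mu p * reply_sqdist y p.1 p.2.
  by rewrite mulr_ge0 ?reply_sqdist_ge0.
rewrite pair_big /= (bigD1 (s, a)) //=; apply: ltr_pwDl; last first.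
  by apply: sumr_ge0 => p _; apply: term_ge0.
by rewrite mulr_gt0 // reply_sqdist_gt0 // (inj_eq y_inj).
Qed.

End Perturbation.

Theorem lemma13 (R : realType) (S B : finType)
    (m : {ffun S -> R}) (hm : is_dist m) (hfull : forall s, 0 < m s)
    (u : {ffun S * B -> R}) (y : S -> {ffun B -> R})
    (hy : forall s, is_dist (y s)) (hinj : injective y)
    (hopt : forall mu, in_M m mu -> U1 u mu y <= U1 u (mu0 m) y) :
  forall eps : R, 0 < eps ->
  exists ut : {ffun S * B -> R},
    (forall p, `|ut p - u p| < eps) /\
    (forall mu, in_M m mu -> mu <> mu0 m -> U1 ut mu y < U1 ut (mu0 m) y).
Proof.
move=> eps eps_gt0; set d := eps / 2.
have d_gt0 : 0 < d by rewrite divr_gt0.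
exists [ffun p => u p + d * reply_match y p]; split.
  move=> [s b]; rewrite !ffunE /= addrC addKr normrM gtr0_norm //.
  have [y_ge0 _] := hy s; rewrite ger0_norm //.
  apply: (le_lt_trans (y := d)).
    by apply: ler_piMr; [apply: ltW | apply: dist_le1].
  by rewrite /d ltr_pdivrMr // ltr_pMr // ltr1n.
move=> mu M_mu mu_neq; rewrite !U1_addZ.
apply: (le_lt_trans (y := U1 u (mu0 m) y + d * U1 (reply_match y) mu y)).
  by rewrite lerD2r hopt.
by rewrite ltrD2l ltr_pM2l // U1_reply_match_lt.
Qed.
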